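(* Let $n\ge 2$, $x\in\mathbb{R}^{n+1}$ with $|x|<1$, and $p \geq 1$. Then, as symmetric 2-tensors on $S^n$, $$\frac{\nabla_{S^n}^2 |\cdot - x|^p}{|\cdot - x|^p} \geq -\frac{p}{4}\, g .$$
   Context: $S^n\subset\mathbb{R}^{n+1}$ is the unit sphere with its canonical Riemannian metric $g$; $\nabla_{S^n}^2$ is the Riemannian Hessian on $(S^n,g)$; $|\cdot|$ is the Euclidean norm, and $|\cdot-x|^p$ denotes the function $y\mapsto |y-x|^p$ on $S^n$. *)

From Stdlib Require Import Reals.
Open Scope R_scope.

(* Vectors of R^(n+1) are represented as functions nat -> R; only the
   coordinates 0..n are ever read. *)
Definition dot (n : nat) (u v : nat -> R) : R :=
  sum_f_R0 (fun i => u i * v i) n.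

Definition norm (n : nat) (u : nat -> R) : R := sqrt (dot n u u).

Definition on_sphere (n : nat) (y : nat -> R) : Prop := norm n y = 1.

Definition tangent (n : nat) (y v : nat -> R) : Prop := dot n y v = 0.

Definition sinc (s : R) : R := if Req_EM_T s 0 then 1 else sin s / s.

Definition sphere_exp (n : nat) (y w : nat -> R) : nat -> R :=
  fun i => cos (norm n w) * y i + sinc (norm n w) * w i.

Definition dist_pow (n : nat) (p : R) (x z : nat -> R) : R :=
  Rpower (norm n (fun i => z i - x i)) p.

(* d2 is the Riemannian Hessian quadratic form (Hess f)_y(v,v) of f on S^n:
   the second derivative at t = 0 of f along the geodesic t |-> exp_y(t v). *)
Definition sphere_hessian_quad (n : nat) (f : (nat -> R) -> R)
    (y v : nat -> R) (d2 : R) : Prop :=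
  exists d1 : R -> R,
    (forall t : R,
       derivable_pt_lim (fun s => f (sphere_exp n y (fun i => s * v i))) t (d1 t))
    /\ derivable_pt_lim d1 0 d2.

(* Along the great circle t |-> exp_y(t v), with a = |v| and e = v / a, the squared
   distance to x is  G(t) = 1 + |x|^2 - 2 (c cos(ta) + s sin(ta)),  c = <y,x>, s = <e,x>,
   so the Hessian ratio of G^(p/2) at t = 0 is  p c a^2 / D + p (p-2) s^2 a^2 / D^2  with
   D = G(0) = 1 + |x|^2 - 2c.  Adding p a^2 / 4 and multiplying by D^2 / p gives
   a^2 [ (|x|^2 - c^2 - s^2) + (p-1) s^2 + (1 - |x|^2)^2 / 4 ],
   which is nonnegative by Bessel's inequality for the orthonormal pair (y, e). *)

From Pilot Require Import Defs.
From Stdlib Require Import Reals Lra Psatz FunctionalExtensionality.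
From Coquelicot Require Coquelicot.
Open Scope R_scope.

Lemma dot_sym n u w : dot n u w = dot n w u.
Proof. unfold dot; induction n; simpl; [ring | rewrite IHn; ring]. Qed.

Lemma dot_div_l n u w k : dot n (fun i => u i / k) w = dot n u w / k.
Proof. unfold dot, Rdiv; induction n; simpl; [ring | rewrite IHn; ring]. Qed.

Lemma dot_div_r n u w k : dot n u (fun i => w i / k) = dot n u w / k.
Proof. unfold dot, Rdiv; induction n; simpl; [ring | rewrite IHn; ring]. Qed.

Lemma dot_lincomb3 n al be ga (u w z : nat -> R) :
  dot n (fun i => al * u i + be * w i + ga * z i) (fun i => al * u i + be * w i + ga * z i) =
  al^2 * dot n u u + be^2 * dot n w w + ga^2 * dot n z z
  + 2 * al * be * dot n u w + 2 * al * ga * dot n u z + 2 * be * ga * dot n w z.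
Proof. unfold dot; induction n; simpl; [ring | rewrite IHn; ring]. Qed.

Lemma dot_self_ge0 n u : 0 <= dot n u u.
Proof. unfold dot; induction n; simpl; nra. Qed.

Lemma dot_self_eq0 n u w : dot n u u = 0 -> dot n u w = 0.
Proof.
  unfold dot; induction n as [|n IHn]; simpl; intros h0.
  - assert (u 0%nat = 0) as -> by nra. ring.
  - pose proof (dot_self_ge0 n u) as hge; unfold dot in hge.
    assert (u (S n) = 0) as -> by nra.
    rewrite IHn by nra. ring.
Qed.

Lemma norm_sqr n u : norm n u * norm n u = dot n u u.
Proof. apply sqrt_sqrt, dot_self_ge0. Qed.

Lemma norm_scal n t u : norm n (fun i => t * u i) = Rabs t * norm n u.
Proof.
  unfold norm.
  replace (dot n (fun i => t * u i) (fun i => t * u i)) with (Rsqr t * dot n u u)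
    by (symmetry; unfold dot, Rsqr; induction n; simpl; [ring | rewrite IHn; ring]).
  rewrite sqrt_mult_alt by apply Rle_0_sqr. now rewrite sqrt_Rsqr_abs.
Qed.

Lemma on_sphere_dot n y : on_sphere n y -> dot n y y = 1.
Proof. intros hy. rewrite <- norm_sqr, hy. ring. Qed.

Lemma dot_lt1_of_norm n x : norm n x < 1 -> dot n x x < 1.
Proof.
  intros hx. rewrite <- norm_sqr. pose proof (sqrt_pos (dot n x x)). unfold norm in *. nra.
Qed.

(* [v i / norm n v] is the junk zero vector when [norm n v = 0]; the next two lemmas
   hold in both cases. *)
Lemma dot_normalize n v w : dot n v w = norm n v * dot n (fun i => v i / norm n v) w.
Proof.
  rewrite dot_div_l.
  destruct (Req_dec (norm n v) 0) as [h0 | hne].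
  - rewrite h0, Rmult_0_l. apply dot_self_eq0. rewrite <- norm_sqr, h0. ring.
  - field. exact hne.
Qed.

Lemma dot_normalize_self_le1 n v :
  dot n (fun i => v i / norm n v) (fun i => v i / norm n v) <= 1.
Proof.
  rewrite dot_div_l, dot_div_r, <- norm_sqr.
  destruct (Req_dec (norm n v) 0) as [h0 | hne].
  - rewrite h0. unfold Rdiv. rewrite Rmult_0_l, Rmult_0_l. lra.
  - right. field. exact hne.
Qed.

Lemma bessel_pair n x y e :
  dot n y y = 1 -> dot n y e = 0 -> dot n e e <= 1 ->
  (dot n y x)^2 + (dot n e x)^2 <= dot n x x.
Proof.
  intros hyy hye hee.
  pose proof (dot_self_ge0 n (fun i => 1 * x i + (- dot n y x) * y i + (- dot n e x) * e i)) as h.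
  rewrite dot_lincomb3, hyy, hye, (dot_sym n x y), (dot_sym n x e) in h.
  pose proof (pow2_ge_0 (dot n e x)). nra.
Qed.

Lemma sinc_opp s : sinc (- s) = sinc s.
Proof.
  unfold sinc. destruct (Req_EM_T (- s) 0), (Req_EM_T s 0); try reflexivity; try lra.
  rewrite sin_neg. field. lra.
Qed.

Lemma mul_sinc s : s * sinc s = sin s.
Proof.
  unfold sinc. destruct (Req_EM_T s 0) as [-> | hs].
  - now rewrite sin_0, Rmult_0_l.
  - field. exact hs.
Qed.

Lemma sphere_exp_scal n y v t :
  sphere_exp n y (fun i => t * v i) =
  (fun i => cos (t * norm n v) * y i + (t * sinc (t * norm n v)) * v i).
Proof.
  apply functional_extensionality; intro i. unfold sphere_exp. rewrite norm_scal.
  destruct (Rle_or_lt 0 t).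
  - rewrite Rabs_right by lra. ring.
  - rewrite Rabs_left by lra.
    rewrite Ropp_mult_distr_l_reverse, cos_neg, sinc_opp. ring.
Qed.

Lemma sphere_exp_zero n y v : sphere_exp n y (fun i => 0 * v i) = y.
Proof.
  rewrite sphere_exp_scal. apply functional_extensionality; intro i.
  rewrite !Rmult_0_l, cos_0. ring.
Qed.

Definition circle_dist2 (r2 c s a t : R) : R :=
  1 + r2 - 2 * (c * cos (t * a) + s * sin (t * a)).

Lemma circle_dist2_pos r2 c s a t :
  c^2 + s^2 <= r2 -> r2 < 1 -> 0 < circle_dist2 r2 c s a t.
Proof.
  intros hcs hr. unfold circle_dist2.
  set (h := c * cos (t * a) + s * sin (t * a)).
  assert (hh : h^2 <= r2).
  { pose proof (sin2_cos2 (t * a)) as sc. unfold Rsqr in sc.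
    pose proof (pow2_ge_0 (c * sin (t * a) - s * cos (t * a))). unfold h. nra. }
  assert (h < 1) by nra.
  nra.
Qed.

Lemma sphere_exp_dist2 n x y v t :
  on_sphere n y -> tangent n y v ->
  dot n (fun i => sphere_exp n y (fun i => t * v i) i - x i)
        (fun i => sphere_exp n y (fun i => t * v i) i - x i)
  = circle_dist2 (dot n x x) (dot n y x) (dot n (fun i => v i / norm n v) x) (norm n v) t.
Proof.
  intros hy hv. unfold tangent in hv. rewrite sphere_exp_scal.
  set (a := norm n v). set (B := t * sinc (t * a)).
  replace (fun i => cos (t * a) * y i + B * v i - x i)
    with (fun i => cos (t * a) * y i + B * v i + (-1) * x i)
    by (apply functional_extensionality; intro; ring).
  rewrite dot_lincomb3, on_sphere_dot, hv by exact hy.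
  rewrite <- norm_sqr, (dot_normalize n v x). fold a.
  assert (hBa : B * a = sin (t * a)) by (unfold B; rewrite <- mul_sinc; ring).
  pose proof (sin2_cos2 (t * a)) as sc. unfold Rsqr in sc.
  unfold circle_dist2.
  replace (B^2 * (a * a)) with (sin (t * a) * sin (t * a)) by (rewrite <- hBa; ring).
  replace (2 * B * -1 * (a * dot n (fun i => v i / a) x))
    with (- 2 * sin (t * a) * dot n (fun i => v i / a) x) by (rewrite <- hBa; ring).
  nra.
Qed.

Lemma Rpower_sqrt_l g p : 0 < g -> Rpower (sqrt g) p = Rpower g (p / 2).
Proof.
  intros hg. rewrite <- Rpower_sqrt by exact hg. rewrite Rpower_mult. f_equal. field.
Qed.

(* Coquelicot is imported only locally: its [norm] would shadow [Defs.norm]. *)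
Module CircleCalculus.
Import Coquelicot.Coquelicot.

Definition circle_pow_deriv (p r2 c s a t : R) : R :=
  p / 2 * Rpower (circle_dist2 r2 c s a t) (p / 2)
  * (2 * a * (c * sin (t * a) - s * cos (t * a))) / circle_dist2 r2 c s a t.

Section Derivatives.
Variables p r2 c s a : R.
Hypothesis hpos : forall t, 0 < circle_dist2 r2 c s a t.

Lemma circle_pow_derivable t :
  derivable_pt_lim (fun t => Rpower (circle_dist2 r2 c s a t) (p / 2)) t
    (circle_pow_deriv p r2 c s a t).
Proof.
  apply is_derive_Reals. specialize (hpos t).
  unfold circle_pow_deriv, Rpower, circle_dist2 in *. auto_derive.
  - exact hpos.
  - unfold Rminus. field. lra.
Qed.

Lemma circle_pow_deriv_derivable_0 :
  derivable_pt_lim (circle_pow_deriv p r2 c s a) 0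
    (Rpower (1 + r2 - 2 * c) (p / 2)
     * (p * c * a^2 / (1 + r2 - 2 * c) + p * (p - 2) * (s * a)^2 / (1 + r2 - 2 * c)^2)).
Proof.
  apply is_derive_Reals. specialize (hpos 0).
  unfold circle_pow_deriv, Rpower, circle_dist2 in *.
  rewrite Rmult_0_l, cos_0, sin_0 in hpos.
  auto_derive.
  - rewrite Rmult_0_l, cos_0, sin_0. repeat split; lra.
  - rewrite Rmult_0_l, cos_0, sin_0.
    replace (1 + r2 + - (2 * (c * 1 + s * 0))) with (1 + r2 - 2 * c) by ring.
    unfold Rminus. field. lra.
Qed.

End Derivatives.
End CircleCalculus.
Import CircleCalculus.

Lemma hessian_ratio_lower_bound p r2 c s a :
  1 <= p -> c^2 + s^2 <= r2 ->
  let D := 1 + r2 - 2 * c in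
  0 < D ->
  p * c * a^2 / D + p * (p - 2) * (s * a)^2 / D^2 >= - (p / 4) * a^2.
Proof.
  intros hp hcs D hD.
  assert (hnum : 0 <= a^2 * ((r2 - c^2 - s^2) + (p - 1) * s^2 + (1 - r2)^2 / 4)).
  { apply Rmult_le_pos; [apply pow2_ge_0 |].
    pose proof (pow2_ge_0 s). pose proof (pow2_ge_0 (1 - r2)). nra. }
  assert (heq : p * c * a^2 / D + p * (p - 2) * (s * a)^2 / D^2 + p / 4 * a^2
                = p * (a^2 * ((r2 - c^2 - s^2) + (p - 1) * s^2 + (1 - r2)^2 / 4)) / D^2).
  { unfold D in *. field. lra. }
  assert (0 <= p * (a^2 * ((r2 - c^2 - s^2) + (p - 1) * s^2 + (1 - r2)^2 / 4)) / D^2).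
  { apply Rmult_le_pos; [apply Rmult_le_pos; lra |].
    apply Rlt_le, Rinv_0_lt_compat, pow_lt, hD. }
  lra.
Qed.

Theorem mainTheorem3 (n : nat) (x : nat -> R) (p : R) :
  (2 <= n)%nat -> norm n x < 1 -> 1 <= p ->
  forall y v : nat -> R, on_sphere n y -> tangent n y v ->
  exists d2 : R,
    sphere_hessian_quad n (dist_pow n p x) y v d2 /\
    d2 / dist_pow n p x y >= - (p / 4) * dot n v v.
Proof.
  intros _ hx hp y v hy hv.
  set (a := norm n v). set (e := fun i => v i / a).
  set (r2 := dot n x x). set (c := dot n y x). set (s := dot n e x).
  assert (hbessel : c^2 + s^2 <= r2).
  { apply bessel_pair.
    - exact (on_sphere_dot n y hy).
    - unfold e. rewrite dot_div_r, hv. apply Rdiv_0_l.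
    - apply dot_normalize_self_le1. }
  assert (hpos : forall t, 0 < circle_dist2 r2 c s a t).
  { intro t. apply circle_dist2_pos; [exact hbessel | apply dot_lt1_of_norm, hx]. }
  assert (hgeod : forall t, dist_pow n p x (sphere_exp n y (fun i => t * v i))
                            = Rpower (circle_dist2 r2 c s a t) (p / 2)).
  { intro t. unfold dist_pow, norm at 1.
    rewrite sphere_exp_dist2 by assumption. apply Rpower_sqrt_l, hpos. }
  assert (hy0 : dist_pow n p x y = Rpower (1 + r2 - 2 * c) (p / 2)).
  { rewrite <- (sphere_exp_zero n y v), hgeod.
    unfold circle_dist2. rewrite Rmult_0_l, cos_0, sin_0. f_equal. ring. }
  eexists; split.
  - exists (circle_pow_deriv p r2 c s a); split.
    + intro t. rewrite (functional_extensionality _ _ hgeod). apply circle_pow_derivable, hpos.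
    + apply circle_pow_deriv_derivable_0, hpos.
  - rewrite hy0, <- norm_sqr. fold a.
    specialize (hpos 0). unfold circle_dist2 in hpos.
    rewrite Rmult_0_l, cos_0, sin_0, Rmult_1_r, Rmult_0_r, Rplus_0_r in hpos.
    assert (0 < Rpower (1 + r2 - 2 * c) (p / 2)) by apply exp_pos.
    replace (Rpower (1 + r2 - 2 * c) (p / 2) * _ / Rpower (1 + r2 - 2 * c) (p / 2))
      with (p * c * a^2 / (1 + r2 - 2 * c) + p * (p - 2) * (s * a)^2 / (1 + r2 - 2 * c)^2)
      by (field; lra).
    replace (a * a) with (a^2) by ring.
    apply hessian_ratio_lower_bound; lra.
Qed.
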